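(* Let $G$ be a graph without isolated vertices and $T$ a solution counting decision tree for $\varphi(G)$. Let $u$ be a node of $T$ labelled by a variable $x$ that is not forced to $1$ by $A_u$, and let $F^u=\varphi(G)|_{A_u}$. Then $|F^u|_{\neg x}|/|F^u|\geq (1/2)^{|N^u(x)|+1}$ and $|F^u|_{x}|/|F^u|\geq 1/2$.
   Context: $\varphi(G)$ is the CNF on variables $V(G)$ with clauses $(u\vee v)$ for $\{u,v\}\in E(G)$. Boolean functions are identified with their sets of satisfying assignments (sets of literals); $F|_S$ is the function on the remaining variables whose satisfying assignments are the $S'$ with $S\cup S'$ satisfying $F$; $|\cdot|$ counts satisfying assignments. Decision tree for $F$ (not constant false): root labelled by some $x\in Var(F)$; for each literal $\ell\in\{x,\neg x\}$ occurring in some satisfying assignment, an outgoing edge labelled $\ell$ whose head is a leaf if $|Var(F)|=1$ and otherwise the root of a decision tree for $F|_\ell$. A solution counting decision tree additionally gives the edge leaving node $w$ with label $\ell$ the weight $|F|_{A_w\cup\{\ell\}}|/|F|_{A_w}|$. $A_w$ is the set of literals labelling the root-$w$ path. A variable $y$ is forced to $1$ by $A_u$ if some neighbour $z$ of $y$ in $G$ has $\neg z\in A_u$. $N^u(y)$ is the set of neighbours $z$ of $y$ that do not occur in $A_u$ and are not forced to $1$ by $A_u$. *)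

From mathcomp Require Import all_boot all_order all_algebra.
Set Implicit Arguments. Unset Strict Implicit. Unset Printing Implicit Defensive.

Section Defs.
Variable V : finType.

(* A literal (x, b) means "x = b"; (x,true) is x, (x,false) is ~x. *)
Definition lit := (V * bool)%type.

Definition sat_phi (G : rel V) (s : {ffun V -> bool}) : bool :=
  [forall u, forall v, G u v ==> (s u || s v)].

(* |phi(G)|_A| : number of satisfying assignments of the restriction,
   i.e. of satisfying total assignments extending the partial assignment A. *)
Definition cnt (G : rel V) (A : seq lit) : nat :=
  #|[set s : {ffun V -> bool} | sat_phi G s && all (fun l => s l.1 == l.2) A]|.

Definition forced (G : rel V) (A : seq lit) (y : V) : bool :=
  [exists z, G y z && ((z, false) \in A)].

Definition Nu (G : rel V) (A : seq lit) (y : V) : {set V} :=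
  [set z | G y z && (z \notin [seq l.1 | l <- A]) && ~~ forced G A z].

End Defs.

(* Decision trees: a leaf, or a node labelled by a variable with an optional
   outgoing edge labelled ~x (first) and x (second). *)
Inductive dtree (V : Type) :=
| DLeaf
| DNode of V & option (dtree V) & option (dtree V).
Arguments DLeaf {V}.

(* is_dtree G vars A t : t is a decision tree for F = phi(G)|_A, whose
   variable set is vars. *)
Fixpoint is_dtree (V : finType) (G : rel V) (vars : {set V}) (A : seq (lit V))
  (t : dtree V) : Prop :=
  match t with
  | DLeaf => False
  | DNode x o0 o1 =>
      [/\ x \in vars, 0 < cnt G A,
        match o0 with
        | None => cnt G ((x, false) :: A) = 0
        | Some t' => 0 < cnt G ((x, false) :: A) /\
            (if #|vars| == 1 then t' = DLeaf
             else is_dtree G (vars :\ x) ((x, false) :: A) t')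
        end &
        match o1 with
        | None => cnt G ((x, true) :: A) = 0
        | Some t' => 0 < cnt G ((x, true) :: A) /\
            (if #|vars| == 1 then t' = DLeaf
             else is_dtree G (vars :\ x) ((x, true) :: A) t')
        end]
  end.

(* The internal nodes of t, as pairs (label x, A_u) where A_u is the set
   (listed as a sequence) of literals on the root-u path; A is the path
   prefix accumulated so far. *)
Fixpoint dt_nodes (V : Type) (A : seq (V * bool)) (t : dtree V)
  : seq (V * seq (V * bool)) :=
  match t with
  | DLeaf => [::]
  | DNode x o0 o1 =>
      (x, A) ::
      (match o0 with None => [::] | Some t' => dt_nodes ((x, false) :: A) t' end) ++
      (match o1 with None => [::] | Some t' => dt_nodes ((x, true) :: A) t' end)
  end.

(* Every solution of F^u becomes a solution of F^u|¬x once x is set to 0 and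
   every vertex of N^u(x) to 1: the other neighbours of x are 1 in every
   solution of F^u, either because they are set to 1 in A_u (x is not forced)
   or because they are forced. This map only changes the |N^u(x)| + 1
   coordinates of x and N^u(x), so its fibres have at most 2^(|N^u(x)|+1)
   elements. Likewise, as phi(G) is monotone, setting x to 1 maps solutions of
   F^u to solutions of F^u|x with fibres of size at most 2. *)
From mathcomp Require Import all_boot all_order all_algebra.
Import Order.TTheory GRing.Theory Num.Theory.

Set Implicit Arguments.
Unset Strict Implicit.
Unset Printing Implicit Defensive.

Section Assignments.
Variable V : finType.
Implicit Types (W : {set V}) (s t : {ffun V -> bool}).

Definition agree_off W s t := [forall v, (v \notin W) ==> (s v == t v)].

Lemma agree_offP W s t :
  reflect (forall v, v \notin W -> s v = t v) (agree_off W s t).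
Proof.
apply: (iffP forallP) => [agr v vW | agr v].
  by apply/eqP; move/implyP: (agr v); apply.
by apply/implyP=> /agr ->.
Qed.

Lemma card_agree_off W t : #|[set s | agree_off W s t]| <= 2 ^ #|W|.
Proof.
pose xor_t s : {ffun V -> bool} := [ffun v => s v (+) t v].
have xor_t_inj : injective xor_t.
  move=> s1 s2 /ffunP eq12; apply/ffunP=> v; have := eq12 v; rewrite !ffunE.
  by case: (s1 v); case: (s2 v); case: (t v).
rewrite -(card_imset _ xor_t_inj) -{1}card_bool -(card_pffun_on false).
apply/subset_leq_card/subsetP=> _ /imsetP[s + ->]; rewrite inE => /agree_offP agr.
apply/pffun_onP; split=> //; apply/subsetP=> v; rewrite inE ffunE.
by apply: contraR => /agr ->; case: (t v).
Qed.

Lemma card_le_imset_agree_off (A : {set {ffun V -> bool}}) W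
    (f : {ffun V -> bool} -> {ffun V -> bool}) :
  (forall s, agree_off W s (f s)) -> #|A| <= #|f @: A| * 2 ^ #|W|.
Proof.
move=> f_agr; rewrite -sum1_card (partition_big f (mem (f @: A))) /=; last first.
  by move=> s sA; apply: imset_f.
rewrite -sum_nat_const; apply: leq_sum => _ /imsetP[s0 _ ->].
rewrite sum1_card; apply: leq_trans (card_agree_off W (f s0)).
apply/subset_leq_card/subsetP=> s; rewrite !inE => /andP[_ /eqP <-].
exact: f_agr.
Qed.

Definition set_var s x b : {ffun V -> bool} :=
  [ffun v => if v == x then b else s v].

Definition set_true_on W s : {ffun V -> bool} := [ffun v => (v \in W) || s v].

End Assignments.

Lemma exp_half_le_ratio (R : numFieldType) (a b k : nat) :
  0 < b -> b <= a * 2 ^ k -> ((1 / 2 : R) ^+ k <= a%:R / b%:R)%R.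
Proof.
move=> b_gt0 le_b; rewrite ler_pdivlMr ?ltr0n // div1r exprVn mulrC.
by rewrite ler_pdivrMr ?exprn_gt0 // -natrX -natrM ler_nat.
Qed.

Section Solutions.
Variables (V : finType) (G : rel V).
Implicit Types (A : seq (lit V)) (s : {ffun V -> bool}).

Definition sols A := [set s | sat_phi G s && all (fun l => s l.1 == l.2) A].

Lemma cnt_sols A : cnt G A = #|sols A|.
Proof. by []. Qed.

Lemma sat_phiP s : reflect (forall u w, G u w -> s u || s w) (sat_phi G s).
Proof.
apply: (iffP forallP) => [sat u w | sat u].
  by move/forallP/(_ w)/implyP: (sat u); apply.
by apply/forallP=> w; apply/implyP; apply: sat.
Qed.

Lemma sols_lit s A l : s \in sols A -> l \in A -> s l.1 = l.2.
Proof. by rewrite inE => /andP[_ /allP/[apply]/eqP]. Qed.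

Lemma sat_phi_mono s s' : (forall v, s v ==> s' v) -> sat_phi G s -> sat_phi G s'.
Proof.
move=> le_ss' /sat_phiP sat; apply/sat_phiP=> u w /sat.
by case/orP=> [/(implyP (le_ss' u))-> | /(implyP (le_ss' w))->]; rewrite ?orbT.
Qed.

Lemma all_lits_agree A s s' : {in unzip1 A, s =1 s'} ->
  all (fun l => s l.1 == l.2) A = all (fun l => s' l.1 == l.2) A.
Proof. by move=> eq_ss'; apply/eq_in_all=> l lA; rewrite eq_ss' // map_f. Qed.

Lemma cnt_le_cnt_cons A x b (W : {set V}) (f : {ffun V -> bool} -> {ffun V -> bool}) :
    (forall s, agree_off W s (f s)) ->
    (forall s, s \in sols A -> f s \in sols ((x, b) :: A)) ->
  cnt G A <= cnt G ((x, b) :: A) * 2 ^ #|W|.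
Proof.
move=> f_agr f_sols; rewrite !cnt_sols.
apply: leq_trans (card_le_imset_agree_off _ f_agr) _.
rewrite leq_mul2r; apply/orP; right; apply/subset_leq_card/subsetP.
by move=> _ /imsetP[s sA ->]; apply: f_sols.
Qed.

Lemma cnt_le_cnt_set_true A x :
  x \notin unzip1 A -> cnt G A <= cnt G ((x, true) :: A) * 2.
Proof.
move=> xA; have -> : 2 = 2 ^ #|[set x]| by rewrite cards1.
apply: (cnt_le_cnt_cons (f := fun s => set_var s x true)).
  by move=> s; apply/agree_offP=> v; rewrite in_set1 ffunE => /negbTE->.
move=> s; rewrite !inE /= ffunE eqxx => /andP[sat lits].
have le_s : forall v, s v ==> set_var s x true v.
  by move=> v; rewrite ffunE; case: (v == x); rewrite ?implybT ?implybb.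
rewrite (sat_phi_mono le_s sat) (all_lits_agree (s' := s)) // => v vA.
by rewrite ffunE; case: eqP vA => // ->; rewrite (negbTE xA).
Qed.

Hypotheses (Gsym : symmetric G) (Girr : irreflexive G).

Lemma sat_phi_set_false s x :
  sat_phi G s -> (forall w, G x w -> s w) -> sat_phi G (set_var s x false).
Proof.
move=> /sat_phiP sat nbr_true; apply/sat_phiP=> u w uw; rewrite !ffunE.
have [ux|ux] := eqVneq u x; have [wx|wx] := eqVneq w x.
- by move: uw; rewrite ux wx Girr.
- by rewrite nbr_true // -ux.
- by rewrite orbF nbr_true // Gsym -wx.
- exact: sat.
Qed.

Lemma sols_nbr_not_Nu A x w s : s \in sols A -> ~~ forced G A x ->
  G x w -> w \notin Nu G A x -> s w.
Proof.
move=> sA x_free xw; rewrite inE xw /= negb_and !negbK.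
case/orP=> [/mapP[[z b] zbA /= wz] | /existsP[z /andP[wz zA]]].
  subst z; rewrite (sols_lit sA zbA); case: b zbA => // wA.
  by case/negP: x_free; apply/existsP; exists w; rewrite xw.
have /sat_phiP/(_ w z wz) : sat_phi G s by move: sA; rewrite inE => /andP[].
by rewrite (sols_lit sA zA) orbF.
Qed.

Lemma Nu_unassigned A x z : z \in Nu G A x -> z \notin unzip1 A.
Proof. by rewrite inE => /andP[/andP[_ ->]]. Qed.

Lemma cnt_le_cnt_set_false A x : x \notin unzip1 A -> ~~ forced G A x ->
  cnt G A <= cnt G ((x, false) :: A) * 2 ^ #|Nu G A x|.+1.
Proof.
set N := Nu G A x => xA x_free.
have -> : #|N|.+1 = #|x |: N| by rewrite cardsU1 inE Girr.
apply: (cnt_le_cnt_cons (f := fun s => set_var (set_true_on N s) x false)).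
  move=> s; apply/agree_offP=> v; rewrite in_setU1 negb_or !ffunE.
  by case/andP=> /negbTE-> /negbTE->.
move=> s sA; rewrite inE /= ffunE eqxx /=.
move: (sA); rewrite inE => /andP[sat lits]; apply/andP; split.
  apply: sat_phi_set_false.
    by apply: sat_phi_mono sat => v; rewrite ffunE; case: (s v); rewrite ?orbT.
  move=> w xw; rewrite ffunE; case: (boolP (w \in N)) => //= wN.
  exact: sols_nbr_not_Nu sA x_free xw wN.
rewrite (all_lits_agree (s' := s)) // => v vA; rewrite !ffunE.
have vN : v \notin N by apply: contraTN vA => /Nu_unassigned.
by rewrite (negbTE vN); case: eqP vA => // ->; rewrite (negbTE xA).
Qed.

End Solutions.

Section DecisionTrees.
Variables (V : finType) (G : rel V).
Implicit Types (vars : {set V}) (A : seq (lit V)).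

Lemma mem_dt_nodes_node A y o0 o1 x Au :
  (x, Au) \in dt_nodes A (DNode y o0 o1) ->
  (x, Au) = (y, A) \/ exists b t, (if b then o1 else o0) = Some t /\
                                  (x, Au) \in dt_nodes ((y, b) :: A) t.
Proof.
rewrite /= in_cons mem_cat => /orP[/eqP-> | /orP[]]; first by left.
  by case: o0 => // t xt; right; exists false, t.
by case: o1 => // t xt; right; exists true, t.
Qed.

Lemma is_dtree_child vars A y o0 o1 b t :
  is_dtree G vars A (DNode y o0 o1) -> (if b then o1 else o0) = Some t ->
  t = DLeaf \/ is_dtree G (vars :\ y) ((y, b) :: A) t.
Proof.
case=> _ _ ok0 ok1; case: b => ob; [move: ok1 | move: ok0]; rewrite ob.
  by case=> _; case: (_ == 1); [left | right].
by case=> _; case: (_ == 1); [left | right].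
Qed.

Lemma dt_nodes_sat_fresh n vars A t :
  #|vars| <= n -> is_dtree G vars A t -> {in vars, forall y, y \notin unzip1 A} ->
  forall x Au, (x, Au) \in dt_nodes A t -> 0 < cnt G Au /\ x \notin unzip1 Au.
Proof.
elim: n vars A t => [|n IH] vars A [|y o0 o1] // le_vars dt fresh x Au.
  by have [+ _ _ _] := dt; move: le_vars; rewrite leqn0 => /eqP/cards0_eq->; rewrite inE.
have [yv cnt_gt0 _ _] := dt.
case/mem_dt_nodes_node=> [[-> ->] | [b [t [ob xt]]]]; first by split=> //; apply: fresh.
have [t0 | dt_t] := is_dtree_child dt ob; first by rewrite t0 in xt.
apply: IH dt_t _ _ _ xt; first by move: le_vars; rewrite (cardsD1 y) yv.
by move=> z /setD1P[zy zv]; rewrite /= in_cons negb_or zy fresh.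
Qed.

End DecisionTrees.

Local Open Scope ring_scope.

Theorem lemma10 (V : finType) (G : rel V)
  (Gsym : symmetric G) (Girr : irreflexive G)
  (Hno_iso : forall v : V, exists w : V, G v w)
  (T : dtree V) (HT : is_dtree G [set: V] [::] T)
  (x : V) (Au : seq (V * bool))
  (Hu : (x, Au) \in dt_nodes [::] T)
  (Hnf : ~~ forced G Au x) :
  (1 / 2 : rat) ^+ (#|Nu G Au x|.+1)
    <= (cnt G ((x, false) :: Au))%:R / (cnt G Au)%:R
  /\ (1 / 2 : rat) <= (cnt G ((x, true) :: Au))%:R / (cnt G Au)%:R.
Proof.
have [cnt_gt0 xAu] := dt_nodes_sat_fresh (leqnn _) HT (fun y _ => isT) Hu.
split; first exact/exp_half_le_ratio/cnt_le_cnt_set_false.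
by rewrite -[1 / 2]expr1; apply/exp_half_le_ratio/cnt_le_cnt_set_true.
Qed.
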